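(* Assume the demand is i.i.d. with pmf $P_X$. Let $\theta\in\mathcal P_S$, $\xi(w)=\sum_{(x,s):s-x=w}P_X(x)\theta(s)$, and suppose $S_1\sim\theta$. If the constant-distribution policy $\mathbf b=(b,b,\dots)$, $b\in\mathcal B$, is invariant for the initial distribution $\theta$, then for every horizon $T$, $$L_T(\mathbf b)=I(W_1;Y_1)=I(b;\xi).$$
   Context: $\mathcal X=\{0,\dots,m_x\}$, $\mathcal Y=\{0,\dots,m_y\}$, $\mathcal S=\{0,\dots,m_s\}$ with $m_x\le m_y$; $\mathcal W=\{s-x:s\in\mathcal S,x\in\mathcal X\}$; $\mathcal P_S$ the pmfs on $\mathcal S$; $\mathcal Y_\circ(w)=\{y\in\mathcal Y:w+y\in\mathcal S\}$; $\mathcal B$ the conditional pmfs $b(y\mid w)$ with $b(\mathcal Y_\circ(w)\mid w)=1$. Demand $X_t$ i.i.d. $\sim P_X$ independent of $S_1$. The constant-distribution policy $b$ draws $Y_t\sim b(\cdot\mid W_t)$ with $W_t=S_t-X_t$, and $S_{t+1}=S_t+Y_t-X_t$. Let $\theta_t(s)=P(S_t=s\mid Y^{t-1}=y^{t-1})$ and $\xi_t(w)=P(W_t=w\mid Y^{t-1}=y^{t-1})$. The policy $b$ is invariant for initial distribution $\theta_1$ if $\theta_t=\theta_1$ and $\xi_t=\xi_1$ for all $t$ (for all realizations $y^{t-1}$ of positive probability), where $\xi_1(w)=\sum_{(x,s):s-x=w}P_X(x)\theta_1(s)$. $L_T(\mathbf b)=\frac1TI(X^T,S_1;Y^T)$;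 $I(b;\xi)$ is the mutual information between $W\sim\xi$ and $Y\sim b(\cdot\mid W)$. *)

From HB Require Import structures.
From mathcomp Require Import all_boot all_order all_algebra.
From mathcomp Require Import reals exp.
Set Implicit Arguments. Unset Strict Implicit. Unset Printing Implicit Defensive.
Import Order.TTheory GRing.Theory Num.Theory.
Local Open Scope ring_scope.

Definition MI (R : realType) (A B : finType) (p : A -> B -> R) : R :=
  \sum_(a : A) \sum_(b : B)
     (if p a b == 0 then 0
      else p a b * ln (p a b / ((\sum_(b' : B) p a b') * (\sum_(a' : A) p a' b)))).

Definition is_pmf (R : realType) (A : finType) (p : A -> R) : Prop :=
  (forall a, 0 <= p a) /\ \sum_(a : A) p a = 1.

Definition fat (A : Type) (T : nat) (f : {ffun 'I_T -> A}) (d : A) (t : nat) : A :=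
  if insub t is Some i then f i else d.

Section Inventory.
Variables (R : realType) (mx my ms : nat).

(* X = {0..mx}, Y = {0..my}, S = {0..ms}.
   W = {s - x} = {-mx, ..., ms} is encoded by k : 'I_(mx+ms).+1 with w = k - mx. *)
Definition Wt := 'I_(mx + ms).+1.
Definition wval (k : Wt) : int := (k%:Z - mx%:Z)%R.

Definition wenc (s : 'I_ms.+1) (x : 'I_mx.+1) : Wt := inord (s + mx - x)%N.

(* S_{t+1} = S_t + Y_t - X_t (only reached with positive probability inside S) *)
Definition snext (s : 'I_ms.+1) (x : 'I_mx.+1) (y : 'I_my.+1) : 'I_ms.+1 :=
  inord (s + y - x)%N.

(* y \in Y_o(w)  <->  w + y \in S, i.e. 0 <= (k - mx) + y <= ms *)
Definition in_Yo (w : Wt) (y : 'I_my.+1) : bool := (mx <= w + y <= mx + ms)%N.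

Definition is_policy (b : Wt -> 'I_my.+1 -> R) : Prop :=
  forall w, is_pmf (b w) /\ \sum_(y | in_Yo w y) b w y = 1.

Definition xi (PX : 'I_mx.+1 -> R) (theta : 'I_ms.+1 -> R) (w : Wt) : R :=
  \sum_(s : 'I_ms.+1) \sum_(x : 'I_mx.+1 | wenc s x == w) PX x * theta s.

(* state trajectory: state s1 xs ys t = S_{t+1} (0-based t) *)
Fixpoint state (s1 : 'I_ms.+1) (xs : nat -> 'I_mx.+1) (ys : nat -> 'I_my.+1)
  (t : nat) : 'I_ms.+1 :=
  match t with
  | 0 => s1
  | t'.+1 => snext (state s1 xs ys t') (xs t') (ys t')
  end.

Definition stateF (T : nat) (s1 : 'I_ms.+1) (xs : {ffun 'I_T -> 'I_mx.+1})
  (ys : {ffun 'I_T -> 'I_my.+1}) (t : nat) : 'I_ms.+1 :=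
  state s1 (fat xs ord0) (fat ys ord0) t.

(* joint pmf of (S_1, X^T, Y^T) under the constant-distribution policy b:
   theta(s1) prod_t P_X(x_t) b(y_t | s_t - x_t) *)
Definition pjoint (T : nat) (PX : 'I_mx.+1 -> R) (theta : 'I_ms.+1 -> R)
  (b : Wt -> 'I_my.+1 -> R) (s1 : 'I_ms.+1) (xs : {ffun 'I_T -> 'I_mx.+1})
  (ys : {ffun 'I_T -> 'I_my.+1}) : R :=
  theta s1 * \prod_(t < T) (PX (xs t) * b (wenc (stateF s1 xs ys t) (xs t)) (ys t)).

(* P(S_{n+1} = s, Y^n = ys) *)
Definition jointSY (n : nat) PX theta b (s : 'I_ms.+1) (ys : {ffun 'I_n -> 'I_my.+1}) : R :=
  \sum_(s1 : 'I_ms.+1) \sum_(xs : {ffun 'I_n -> 'I_mx.+1} | stateF s1 xs ys n == s)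
     pjoint PX theta b s1 xs ys.

Definition pY (n : nat) PX theta b (ys : {ffun 'I_n -> 'I_my.+1}) : R :=
  \sum_(s : 'I_ms.+1) jointSY PX theta b s ys.

(* P(W_{n+1} = w, Y^n = ys), W_{n+1} = S_{n+1} - X_{n+1}, X_{n+1} ~ P_X independent *)
Definition jointWY (n : nat) PX theta b (w : Wt) (ys : {ffun 'I_n -> 'I_my.+1}) : R :=
  \sum_(s : 'I_ms.+1) \sum_(x : 'I_mx.+1 | wenc s x == w) jointSY PX theta b s ys * PX x.

(* invariance: theta_t = theta_1 (= theta) and xi_t = xi_1 for all t and all
   y^{t-1} of positive probability (t = n+1) *)
Definition invariant_for PX theta b : Prop :=
  forall (n : nat) (ys : {ffun 'I_n -> 'I_my.+1}), 0 < pY PX theta b ys ->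
    (forall s, jointSY PX theta b s ys / pY PX theta b ys = theta s) /\
    (forall w, jointWY PX theta b w ys / pY PX theta b ys = xi PX theta w).

Definition LT (T : nat) PX theta b : R :=
  MI (fun (a : ('I_ms.+1 * {ffun 'I_T -> 'I_mx.+1})%type) (ys : {ffun 'I_T -> 'I_my.+1}) =>
        pjoint PX theta b a.1 a.2 ys) / T%:R.

Definition IW1Y1 PX theta b : R :=
  MI (fun (w : Wt) (y : 'I_my.+1) =>
    \sum_(s1 : 'I_ms.+1) \sum_(xs : {ffun 'I_1 -> 'I_mx.+1})
      \sum_(ys : {ffun 'I_1 -> 'I_my.+1} | (wenc s1 (xs ord0) == w) && (ys ord0 == y))
        pjoint PX theta b s1 xs ys).

Definition Ib (b : Wt -> 'I_my.+1 -> R) (q : Wt -> R) : R :=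
  MI (fun (w : Wt) (y : 'I_my.+1) => q w * b w y).

End Inventory.

From HB Require Import structures.
From mathcomp Require Import all_boot all_order all_algebra.
From mathcomp Require Import reals exp.
Import Order.TTheory GRing.Theory Num.Theory.
Local Open Scope ring_scope.
Set Implicit Arguments. Unset Strict Implicit. Unset Printing Implicit Defensive.

(* Invariance says that, whatever outputs y^t were observed, W_(t+1) is
   distributed as xi.  Hence the outputs are i.i.d. with law
   q(y) = sum_w xi(w) b(y|w), and since P(y^T | x^T, s_1) = prod_t b(y_t|W_t)
   the log-likelihood ratio inside I(X^T, S_1; Y^T) is the cumulated
   information density sum_t ln (b(y_t|W_t) / q(y_t)).  Each of its T terms
   has expectation I(b; xi), again because W_t ~ xi. *)

Section FfunRcons.
Variable A : Type.

Definition ffun_rcons n (g : {ffun 'I_n -> A}) (a : A) : {ffun 'I_n.+1 -> A} :=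
  [ffun i : 'I_n.+1 => fat g a i].

Definition ffun_belast n (f : {ffun 'I_n.+1 -> A}) : {ffun 'I_n -> A} :=
  [ffun i => f (widen_ord (leqnSn n) i)].

Lemma fat_lt n (g : {ffun 'I_n -> A}) d i (lt_in : (i < n)%N) :
  fat g d i = g (Ordinal lt_in).
Proof. by rewrite /fat insubT. Qed.

Lemma fat_ge n (g : {ffun 'I_n -> A}) d i : (n <= i)%N -> fat g d i = d.
Proof. by move=> le_ni; rewrite /fat insubF // ltnNge le_ni. Qed.

Lemma fat_ord n (g : {ffun 'I_n -> A}) d (i : 'I_n) : fat g d i = g i.
Proof. by rewrite (fat_lt _ _ (ltn_ord i)); congr (g _); apply: val_inj. Qed.

Lemma ffun_rcons_widen n (g : {ffun 'I_n -> A}) a (i : 'I_n) :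
  ffun_rcons g a (widen_ord (leqnSn n) i) = g i.
Proof. by rewrite ffunE fat_ord. Qed.

Lemma ffun_rcons_last n (g : {ffun 'I_n -> A}) a : ffun_rcons g a ord_max = a.
Proof. by rewrite ffunE fat_ge. Qed.

Lemma ffun_rcons0 (g : {ffun 'I_0 -> A}) a i : ffun_rcons g a i = a.
Proof. by rewrite ffunE fat_ge. Qed.

Lemma fat_rcons n (g : {ffun 'I_n -> A}) a d i : (i < n)%N ->
  fat (ffun_rcons g a) d i = fat g d i.
Proof.
by move=> lt_in; rewrite (fat_lt _ _ (leqW lt_in)) ffunE /= !(fat_lt _ _ lt_in).
Qed.

Lemma ffun_rconsK n (a : A) : cancel (@ffun_rcons n ^~ a) (@ffun_belast n).
Proof. by move=> g; apply/ffunP => i; rewrite ffunE ffun_rcons_widen. Qed.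

Lemma ffun_belastK n (f : {ffun 'I_n.+1 -> A}) :
  ffun_rcons (ffun_belast f) (f ord_max) = f.
Proof.
apply/ffunP => i; rewrite ffunE.
have [lt_in|le_ni] := ltnP i n.
  by rewrite (fat_lt _ _ lt_in) ffunE; congr (f _); apply: val_inj.
rewrite fat_ge //; congr (f _); apply: val_inj => /=.
by apply/eqP; rewrite eqn_leq le_ni -ltnS ltn_ord.
Qed.

End FfunRcons.

Section BigFfun.
Variables (R : Type) (idx : R) (op : Monoid.com_law idx) (A : finType).

Lemma big_ffun0 (F : {ffun 'I_0 -> A} -> R) g0 :
  \big[op/idx]_(g : {ffun 'I_0 -> A}) F g = F g0.
Proof. by apply: big_pred1 => g; apply/esym/eqP/ffunP => -[]. Qed.

Lemma big_ffunS n (F : {ffun 'I_n.+1 -> A} -> R) :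
  \big[op/idx]_(f : {ffun 'I_n.+1 -> A}) F f =
  \big[op/idx]_(g : {ffun 'I_n -> A}) \big[op/idx]_(a : A) F (ffun_rcons g a).
Proof.
rewrite pair_big (reindex (fun p : {ffun 'I_n -> A} * A => ffun_rcons p.1 p.2)) //=.
exists (fun f => (ffun_belast f, f ord_max)) => [[g a] _|f _] /=.
  by rewrite ffun_rconsK ffun_rcons_last.
exact: ffun_belastK.
Qed.

Lemma big_fibers (I J : finType) (h : I -> J) (F : I -> J -> R) :
  \big[op/idx]_(j : J) \big[op/idx]_(i | h i == j) F i j =
  \big[op/idx]_(i : I) F i (h i).
Proof.
rewrite (partition_big h predT) //=; apply: eq_bigr => j _.
by apply: eq_bigr => i /eqP <-.
Qed.

End BigFfun.

Lemma ln_prod (R : realType) (I : finType) (F : I -> R) : (forall i, 0 < F i) ->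
  ln (\prod_i F i) = \sum_i ln (F i).
Proof.
move=> F_gt0; suff [] : \sum_i ln (F i) = ln (\prod_i F i) /\ 0 < \prod_i F i by [].
apply: (big_ind2 (fun x y => x = ln y /\ 0 < y)) => [|x1 x2 y1 y2 [-> ?] [-> ?]|i _].
- by rewrite ln1.
- by rewrite lnM ?posrE ?mulr_gt0.
- by [].
Qed.

Lemma prod_neq0_gt0 (R : realDomainType) (I : finType) (F : I -> R) :
  (forall i, 0 <= F i) -> \prod_i F i != 0 -> forall i, 0 < F i.
Proof.
move=> F_ge0 nz i; rewrite lt_def F_ge0 andbT.
by apply: contraNneq nz => Fi0; apply/prodf_eq0; exists i; rewrite ?Fi0.
Qed.

Lemma eq_MI (R : realType) (A B : finType) (p p' : A -> B -> R) :
  p =2 p' -> MI p = MI p'.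
Proof.
move=> eq_p; rewrite /MI; apply: eq_bigr => a _; apply: eq_bigr => c _.
by rewrite !eq_p; congr (if _ then _ else _ * ln (_ / (_ * _)));
  apply: eq_bigr => *; rewrite eq_p.
Qed.

Section Process.
Variables (R : realType) (mx my ms : nat).
Variables (PX : 'I_mx.+1 -> R) (theta : 'I_ms.+1 -> R) (b : Wt mx ms -> 'I_my.+1 -> R).

Local Notation X := 'I_mx.+1.
Local Notation Y := 'I_my.+1.
Local Notation S := 'I_ms.+1.
Local Notation W := (Wt mx ms).
Local Notation pj := (pjoint PX theta b).
Local Notation xiw := (xi PX theta).

Lemma state_ext (s1 : S) (xs xs' : nat -> X) (ys ys' : nat -> Y) t :
  (forall i, (i < t)%N -> xs i = xs' i) -> (forall i, (i < t)%N -> ys i = ys' i) ->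
  state s1 xs ys t = state s1 xs' ys' t.
Proof.
elim: t => [//|t IH] eq_xs eq_ys /=.
by rewrite IH ?eq_xs ?eq_ys // => i lt_it; [apply: eq_xs|apply: eq_ys]; apply: ltnW.
Qed.

Lemma stateF_rcons n (s1 : S) (xs : {ffun 'I_n -> X}) (ys : {ffun 'I_n -> Y}) x y t :
  (t <= n)%N -> stateF s1 (ffun_rcons xs x) (ffun_rcons ys y) t = stateF s1 xs ys t.
Proof.
by move=> le_tn; apply: state_ext => i lt_it; apply: fat_rcons; apply: leq_trans le_tn.
Qed.

Lemma pjoint_rcons n (s1 : S) (xs : {ffun 'I_n -> X}) (ys : {ffun 'I_n -> Y}) x y :
  pj s1 (ffun_rcons xs x) (ffun_rcons ys y) =
  pj s1 xs ys * (PX x * b (wenc (stateF s1 xs ys n) x) y).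
Proof.
rewrite /pjoint big_ord_recr /= mulrA !ffun_rcons_last stateF_rcons //.
congr (_ * _ * _); apply: eq_bigr => i _.
by rewrite !ffun_rcons_widen stateF_rcons // ltnW.
Qed.

Lemma IW1Y1_Ib : IW1Y1 PX theta b = Ib b xiw.
Proof.
rewrite /IW1Y1 /Ib; apply: eq_MI => w y.
rewrite /xi mulr_suml; apply: eq_bigr => s1 _.
rewrite big_ffunS (big_ffun0 _ _ [ffun i : 'I_0 => ord0]) mulr_suml [RHS]big_mkcond /=.
apply: eq_bigr => x _.
rewrite big_mkcond big_ffunS (big_ffun0 _ _ [ffun i : 'I_0 => ord0]) /= ffun_rcons0.
case: eqP => [<-|_] /=; last by apply: big1.
rewrite (bigD1 y) //= ffun_rcons0 eqxx big1 ?addr0.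
  by rewrite pjoint_rcons /pjoint big_ord0 mulr1 /= mulrA (mulrC (theta s1)).
by move=> y' /negPf ne_y'y; rewrite ffun_rcons0 ne_y'y.
Qed.

Definition expect n (F : S -> {ffun 'I_n -> X} -> {ffun 'I_n -> Y} -> R) : R :=
  \sum_s1 \sum_xs \sum_ys pj s1 xs ys * F s1 xs ys.

Lemma eq_expect n (F G : S -> {ffun 'I_n -> X} -> {ffun 'I_n -> Y} -> R) :
  (forall s1 xs ys, F s1 xs ys = G s1 xs ys) -> expect F = expect G.
Proof. by move=> eq_FG; do 3!apply: eq_bigr => ? _; rewrite eq_FG. Qed.

Lemma expectD n (F G : S -> {ffun 'I_n -> X} -> {ffun 'I_n -> Y} -> R) :
  expect (fun s1 xs ys => F s1 xs ys + G s1 xs ys) = expect F + expect G.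
Proof.
rewrite -big_split; apply: eq_bigr => s1 _; rewrite -big_split.
apply: eq_bigr => xs _; rewrite -big_split; apply: eq_bigr => ys _.
exact: mulrDr.
Qed.

Lemma expect_rcons n (F : S -> {ffun 'I_n.+1 -> X} -> {ffun 'I_n.+1 -> Y} -> R) :
  expect F = expect (fun s1 xs ys => \sum_x \sum_y
    PX x * b (wenc (stateF s1 xs ys n) x) y * F s1 (ffun_rcons xs x) (ffun_rcons ys y)).
Proof.
rewrite /expect; apply: eq_bigr => s1 _; rewrite big_ffunS; apply: eq_bigr => xs _.
under eq_bigr do rewrite big_ffunS.
rewrite exchange_big; apply: eq_bigr => ys _; rewrite mulr_sumr.
apply: eq_bigr => x _; rewrite mulr_sumr; apply: eq_bigr => y _.
by rewrite pjoint_rcons !mulrA.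
Qed.

Lemma sum_jointSY n (ys : {ffun 'I_n -> Y}) (G : S -> R) :
  \sum_s jointSY PX theta b s ys * G s =
  \sum_s1 \sum_(xs : {ffun 'I_n -> X}) pj s1 xs ys * G (stateF s1 xs ys n).
Proof.
under eq_bigr do rewrite mulr_suml; rewrite exchange_big; apply: eq_bigr => s1 _.
under eq_bigr do rewrite mulr_suml.
exact: (big_fibers _ (fun xs => stateF s1 xs ys n) (fun xs s => pj s1 xs ys * G s)).
Qed.

Lemma pYE n (ys : {ffun 'I_n -> Y}) :
  pY PX theta b ys = \sum_s1 \sum_(xs : {ffun 'I_n -> X}) pj s1 xs ys.
Proof.
under [LHS]eq_bigr do rewrite -[jointSY _ _ _ _ _]mulr1.
by rewrite sum_jointSY; under eq_bigr do under eq_bigr do rewrite mulr1.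
Qed.

Lemma sum_jointWY n (ys : {ffun 'I_n -> Y}) (H : W -> R) :
  \sum_w jointWY PX theta b w ys * H w =
  \sum_s jointSY PX theta b s ys * \sum_x PX x * H (wenc s x).
Proof.
under eq_bigr do rewrite mulr_suml; rewrite exchange_big; apply: eq_bigr => s _.
under eq_bigr do rewrite mulr_suml.
rewrite (big_fibers _ (wenc s) (fun x w => jointSY PX theta b s ys * PX x * H w)).
by rewrite mulr_sumr; under [RHS]eq_bigr do rewrite mulrA.
Qed.

Lemma pY_rcons n (ys : {ffun 'I_n -> Y}) y :
  pY PX theta b (ffun_rcons ys y) = \sum_w jointWY PX theta b w ys * b w y.
Proof.
rewrite sum_jointWY sum_jointSY pYE; apply: eq_bigr => s1 _.
rewrite big_ffunS; apply: eq_bigr => xs _; rewrite mulr_sumr.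
by apply: eq_bigr => x _; rewrite pjoint_rcons.
Qed.

Hypotheses (PX_pmf : is_pmf PX) (theta_pmf : is_pmf theta) (b_policy : is_policy b).

Lemma PX_ge0 x : 0 <= PX x. Proof. by case: PX_pmf. Qed.
Lemma theta_ge0 s : 0 <= theta s. Proof. by case: theta_pmf. Qed.
Lemma b_ge0 w y : 0 <= b w y. Proof. by case: (b_policy w) => -[]. Qed.
Lemma sum_b w : \sum_y b w y = 1. Proof. by case: (b_policy w) => -[]. Qed.

Lemma pjoint_ge0 n (s1 : S) (xs : {ffun 'I_n -> X}) ys : 0 <= pj s1 xs ys.
Proof.
rewrite /pjoint mulr_ge0 ?theta_ge0 //; apply: prodr_ge0 => i _.
by rewrite mulr_ge0 ?PX_ge0 ?b_ge0.
Qed.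

Lemma jointSY_ge0 n (ys : {ffun 'I_n -> Y}) s : 0 <= jointSY PX theta b s ys.
Proof. by do 2!apply: sumr_ge0 => ? _; apply: pjoint_ge0. Qed.

Lemma pY_ge0 n (ys : {ffun 'I_n -> Y}) : 0 <= pY PX theta b ys.
Proof. by apply: sumr_ge0 => s _; apply: jointSY_ge0. Qed.

Lemma xi_ge0 w : 0 <= xiw w.
Proof. by do 2!apply: sumr_ge0 => ? _; rewrite mulr_ge0 ?PX_ge0 ?theta_ge0. Qed.

Lemma sum_xi : \sum_w xiw w = 1.
Proof.
rewrite exchange_big -(proj2 theta_pmf); apply: eq_bigr => s _.
rewrite (big_fibers _ (wenc s) (fun x _ => PX x * theta s)) -mulr_suml.
by rewrite (proj2 PX_pmf) mul1r.
Qed.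

Lemma sum_step_kernel (G : X -> W) : \sum_x \sum_y PX x * b (G x) y = 1.
Proof.
rewrite -(proj2 PX_pmf); apply: eq_bigr => x _.
by rewrite -mulr_sumr sum_b mulr1.
Qed.

Lemma sum_step_kernel_shift (G : X -> W) (c : R) (F : W -> Y -> R) :
  \sum_x \sum_y PX x * b (G x) y * (c + F (G x) y) =
  c + \sum_x PX x * \sum_y b (G x) y * F (G x) y.
Proof.
under eq_bigr do under eq_bigr do rewrite mulrDr.
under eq_bigr do rewrite big_split /=.
rewrite big_split /= -[c in RHS]mulr1 -(sum_step_kernel G) mulr_sumr; congr (_ + _).
  by apply: eq_bigr => x _; rewrite mulr_sumr; apply: eq_bigr => y _; rewrite mulrC.
by apply: eq_bigr => x _; rewrite mulr_sumr; apply: eq_bigr => y _; rewrite mulrA.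
Qed.

Lemma sum_pjoint_outputs n (s1 : S) (xs : {ffun 'I_n -> X}) :
  \sum_ys pj s1 xs ys = theta s1 * \prod_(t < n) PX (xs t).
Proof.
elim: n xs => [|n IH] xs.
  by rewrite (big_ffun0 _ _ [ffun i : 'I_0 => ord0]) /pjoint !big_ord0.
rewrite -(ffun_belastK xs) big_ffunS.
under eq_bigr do under eq_bigr do rewrite pjoint_rcons.
under eq_bigr do rewrite -mulr_sumr -mulr_sumr sum_b mulr1.
rewrite -mulr_suml IH big_ord_recr /= mulrA ffun_rcons_last.
by congr (_ * _ * _); apply: eq_bigr => i _; rewrite ffun_rcons_widen.
Qed.

Hypothesis b_invariant : invariant_for PX theta b.

Lemma jointWY_invariant n (ys : {ffun 'I_n -> Y}) w :
  jointWY PX theta b w ys = pY PX theta b ys * xiw w.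
Proof.
have [pY0|pY_neq0] := eqVneq (pY PX theta b ys) 0; last first.
  have pY_gt0 : 0 < pY PX theta b ys by rewrite lt0r pY_neq0 pY_ge0.
  have [_ xi_cond] := b_invariant pY_gt0.
  by rewrite -xi_cond mulrC divfK.
rewrite pY0 mul0r; apply: big1 => s _; apply: big1 => x _.
by rewrite (psumr_eq0P (fun s _ => jointSY_ge0 ys s) pY0) ?mul0r.
Qed.

Definition qY (y : Y) : R := \sum_w xiw w * b w y.

Lemma qY_ge0 y : 0 <= qY y.
Proof. by apply: sumr_ge0 => w _; rewrite mulr_ge0 ?xi_ge0 ?b_ge0. Qed.

Lemma sum_qY : \sum_y qY y = 1.
Proof.
rewrite exchange_big -sum_xi; apply: eq_bigr => w _.
by rewrite -mulr_sumr sum_b mulr1.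
Qed.

Lemma pY_prod n (ys : {ffun 'I_n -> Y}) :
  pY PX theta b ys = \prod_(t < n) qY (ys t).
Proof.
elim: n ys => [|n IH] ys.
  rewrite big_ord0 pYE -(proj2 theta_pmf); apply: eq_bigr => s1 _.
  by rewrite (big_ffun0 _ _ [ffun i : 'I_0 => ord0]) /pjoint big_ord0 mulr1.
rewrite -(ffun_belastK ys) pY_rcons [RHS]big_ord_recr /= ffun_rcons_last.
under eq_bigr do rewrite jointWY_invariant -mulrA.
rewrite -mulr_sumr IH; congr (_ * _).
by apply: eq_bigr => i _; rewrite ffun_rcons_widen.
Qed.

Lemma sum_pY n : \sum_(ys : {ffun 'I_n -> Y}) pY PX theta b ys = 1.
Proof.
under eq_bigr do rewrite pY_prod.
by rewrite -(bigA_distr_bigA (fun _ : 'I_n => qY)) /= sum_qY prodr_const expr1n.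
Qed.

Definition idens (w : W) (y : Y) : R := ln (b w y / qY y).

Definition cum_idens n (s1 : S) (xs : {ffun 'I_n -> X}) (ys : {ffun 'I_n -> Y}) : R :=
  \sum_(t < n) idens (wenc (stateF s1 xs ys t) (xs t)) (ys t).

Lemma ln_pjoint_ratio n (s1 : S) (xs : {ffun 'I_n -> X}) (ys : {ffun 'I_n -> Y}) :
  pj s1 xs ys != 0 ->
  ln (pj s1 xs ys / (theta s1 * \prod_(t < n) PX (xs t) * \prod_(t < n) qY (ys t))) =
  cum_idens s1 xs ys.
Proof.
move=> pj_neq0; have q_neq0 : \prod_(t < n) qY (ys t) != 0.
  rewrite -pY_prod pYE; apply: contra pj_neq0 => /eqP pY0.
  have sum_s1_0 := psumr_eq0P (fun s _ => sumr_ge0 _ (fun xs _ => pjoint_ge0 s xs ys)) pY0.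
  by rewrite (psumr_eq0P (fun xs _ => pjoint_ge0 s1 xs ys) (sum_s1_0 s1 isT)).
move: pj_neq0; rewrite /pjoint big_split /= mulrA mulf_eq0 negb_or => /andP[PX_neq0 b_neq0].
rewrite invfM mulrACA divff // mul1r -prodf_div ln_prod // => t.
by rewrite divr_gt0 ?(prod_neq0_gt0 _ q_neq0) ?(prod_neq0_gt0 _ b_neq0) // => t';
  [apply: b_ge0|apply: qY_ge0].
Qed.

Lemma MI_pjoint n :
  MI (fun (a : (S * {ffun 'I_n -> X})%type) (ys : {ffun 'I_n -> Y}) => pj a.1 a.2 ys) =
  expect (@cum_idens n).
Proof.
rewrite /expect pair_bigA; apply: eq_bigr => -[s1 xs] _; apply: eq_bigr => ys _ /=.
have [->|pj_neq0] := eqVneq (pj s1 xs ys) 0; first by rewrite mul0r.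
rewrite sum_pjoint_outputs.
by rewrite -(pair_bigA _ (fun s1 xs => pj s1 xs ys)) -pYE pY_prod ln_pjoint_ratio.
Qed.

Lemma cum_idens_rcons n (s1 : S) (xs : {ffun 'I_n -> X}) (ys : {ffun 'I_n -> Y}) x y :
  cum_idens s1 (ffun_rcons xs x) (ffun_rcons ys y) =
  cum_idens s1 xs ys + idens (wenc (stateF s1 xs ys n) x) y.
Proof.
rewrite /cum_idens big_ord_recr /= !ffun_rcons_last stateF_rcons //.
congr (_ + _); apply: eq_bigr => i _.
by rewrite !ffun_rcons_widen stateF_rcons // ltnW.
Qed.

Lemma Ib_xi : Ib b xiw = \sum_w xiw w * \sum_y b w y * idens w y.
Proof.
apply: eq_bigr => w _; rewrite mulr_sumr; apply: eq_bigr => y _.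
rewrite -mulr_sumr sum_b mulr1 -/(qY y).
have [xbw0|xbw_neq0] := eqVneq (xiw w * b w y) 0; first by rewrite mulrA xbw0 mul0r.
have xw_neq0 : xiw w != 0 by apply: contraNneq xbw_neq0 => ->; rewrite mul0r.
by rewrite mulrA /idens invfM mulrACA divff // mul1r.
Qed.

(* [wenc (stateF s1 xs ys n) x] encodes W_(n+1) = S_(n+1) - X_(n+1). *)
Lemma expect_next_w n (H : W -> R) :
  expect (fun s1 (xs : {ffun 'I_n -> X}) ys =>
    \sum_x PX x * H (wenc (stateF s1 xs ys n) x)) = \sum_w xiw w * H w.
Proof.
transitivity (\sum_(ys : {ffun 'I_n -> Y}) \sum_w jointWY PX theta b w ys * H w).
  rewrite /expect; under eq_bigr do rewrite exchange_big; rewrite exchange_big.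
  by apply: eq_bigr => ys _; rewrite sum_jointWY sum_jointSY.
under eq_bigr do under eq_bigr do rewrite jointWY_invariant -mulrA.
under eq_bigr do rewrite -mulr_sumr.
by rewrite -mulr_suml sum_pY mul1r.
Qed.

Lemma expect_cum_idens n : expect (@cum_idens n) = n%:R * Ib b xiw.
Proof.
elim: n => [|n IH].
  by rewrite mul0r; do 3!apply: big1 => ? _; rewrite /cum_idens big_ord0 mulr0.
rewrite expect_rcons.
under eq_expect do under eq_bigr do under eq_bigr do rewrite cum_idens_rcons.
under eq_expect do rewrite sum_step_kernel_shift.
rewrite expectD IH (expect_next_w n (fun w => \sum_y b w y * idens w y)) -Ib_xi.
by rewrite -addn1 natrD mulrDl mul1r.
Qed.

End Process.

Theorem lemma6 (R : realType) (mx my ms : nat) (Hxy : (mx <= my)%N)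
  (PX : 'I_mx.+1 -> R) (theta : 'I_ms.+1 -> R) (b : Wt mx ms -> 'I_my.+1 -> R) :
  is_pmf PX -> is_pmf theta -> is_policy b ->
  invariant_for PX theta b ->
  forall T : nat, (0 < T)%N ->
    LT T PX theta b = IW1Y1 PX theta b /\
    IW1Y1 PX theta b = Ib b (xi PX theta).
Proof.
move=> PX_pmf theta_pmf b_policy b_inv T T_gt0; rewrite IW1Y1_Ib; split=> //.
rewrite /LT (MI_pjoint PX_pmf theta_pmf b_policy b_inv).
rewrite (expect_cum_idens PX_pmf theta_pmf b_policy b_inv) mulrC mulKf //.
by rewrite pnatr_eq0 -lt0n.
Qed.
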